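(* Let $G$ be a directed graph with vertices $s,t$ and $k\ge1$. For any $C_1,C_2\in L^*$ we have $|E(C_1\vee C_2)|+|E(C_1\wedge C_2)|\ge|E(C_1)|+|E(C_2)|$.
   Context: An $s$-$t$ cut of a directed graph $G$ is a set $X\subseteq E(G)$ such that removing $X$ leaves no directed $s$-$t$ path; $\Gamma_G(s,t)$ is the set of $s$-$t$ cuts of minimum cardinality. Fix a maximum-size collection $\mathcal P$ of pairwise edge-disjoint directed $s$-$t$ paths (each minimum $s$-$t$ cut contains exactly one edge of each path in $\mathcal P$). For $X,Y\in\Gamma_G(s,t)$, $S_{\min}(X\cup Y)$ (resp. $S_{\max}(X\cup Y)$) consists, for each $p\in\mathcal P$, of the edge of $(X\cup Y)\cap p$ occurring first (resp. last) along $p$. $X\le Y$ means every directed $s$-$t$ path meets an edge of $X$ at or before an edge of $Y$. $U^k_{\mathrm{lr}}$ is the set of $k$-tuples $[X_1,\dots,X_k]$ of elements of $\Gamma_G(s,t)$ with $X_i\le X_j$ for all $i<j$. $L^*$ is the lattice on $U^k_{\mathrm{lr}}$ with componentwise order, join $[X_i]_i\vee[Y_i]_i=[S_{\max}(X_i\cup Y_i)]_i$ and meet $[X_i]_i\wedge[Y_i]_i=[S_{\min}(X_i\cup Y_i)]_i$. For $C=[X_1,\dots,X_k]$, $E(C)=\bigcup_{i=1}^kX_i$. *)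

From mathcomp Require Import all_boot.
Set Implicit Arguments. Unset Strict Implicit. Unset Printing Implicit Defensive.

Section Graph.
Variables (V E : finType) (src tgt : E -> V).

Fixpoint walkb (x : V) (p : seq E) : bool :=
  match p with
  | [::] => true
  | e :: p' => (src e == x) && walkb (tgt e) p'
  end.

Definition dipath (s t : V) (p : seq E) : bool :=
  [&& walkb s p, last s (map tgt p) == t & uniq (s :: map tgt p)].

Definition st_cut (s t : V) (X : {set E}) : Prop :=
  forall p, dipath s t p -> has (fun e => e \in X) p.

Definition min_st_cut (s t : V) (X : {set E}) : Prop :=
  st_cut s t X /\ forall Y : {set E}, st_cut s t Y -> #|X| <= #|Y|.

Definition disjoint_paths (s t : V) (P : seq (seq E)) : Prop :=
  all (dipath s t) P /\ pairwise (fun p q => ~~ has (fun e => e \in q) p) P.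

Definition max_disjoint_paths (s t : V) (P : seq (seq E)) : Prop :=
  disjoint_paths s t P /\
  forall Q, disjoint_paths s t Q -> size Q <= size P.

Definition cut_le (s t : V) (X Y : {set E}) : Prop :=
  forall p, dipath s t p ->
    find (fun e => e \in X) p <= find (fun e => e \in Y) p.

Definition first_in (A : {set E}) (p : seq E) : option E :=
  ohead [seq e <- p | e \in A].
Definition last_in (A : {set E}) (p : seq E) : option E :=
  ohead (rev [seq e <- p | e \in A]).

Definition S_min (P : seq (seq E)) (A : {set E}) : {set E} :=
  [set e | has (fun p => first_in A p == Some e) P].
Definition S_max (P : seq (seq E)) (A : {set E}) : {set E} :=
  [set e | has (fun p => last_in A p == Some e) P].

Definition U_lr (s t : V) (k : nat) (C : 'I_k -> {set E}) : Prop :=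
  (forall i, min_st_cut s t (C i)) /\
  (forall i j : 'I_k, i < j -> cut_le s t (C i) (C j)).

Definition Ljoin (P : seq (seq E)) (k : nat) (C D : 'I_k -> {set E}) :
  'I_k -> {set E} := fun i => S_max P (C i :|: D i).
Definition Lmeet (P : seq (seq E)) (k : nat) (C D : 'I_k -> {set E}) :
  'I_k -> {set E} := fun i => S_min P (C i :|: D i).

Definition Eset (k : nat) (C : 'I_k -> {set E}) : {set E} :=
  \bigcup_(i < k) C i.

End Graph.

From mathcomp Require Import all_boot zify.

Set Implicit Arguments. Unset Strict Implicit. Unset Printing Implicit Defensive.

(* Augmenting a maximum family P of edge-disjoint s-t paths along the residual
   graph of its edge set is impossible, so the edges of P leaving the set R of
   residually reachable vertices form an s-t cut with at most |P| edges (each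
   path of P leaves R once and never re-enters it).  Hence every minimum cut
   lies in the union of P and meets each path of P in exactly one edge.

   Fix a path p of P and let a_i, b_i be the positions on p of the i-th cuts
   of C1 and C2; they are nondecreasing in i because of the left-right order,
   and the i-th cuts of the join and of the meet sit at max(a_i, b_i) and
   min(a_i, b_i).  The edges of E(C) on p are counted by the number of
   distinct values of the position sequence, i.e. one plus its number of
   increases, and for two nondecreasing sequences every step satisfies
   [a <> a'] + [b <> b'] <= [max <> max'] + [min <> min'].  Summing over
   the paths of P, which cover E(C1) and E(C2), gives the inequality. *)

Lemma count_mem_card (T : finType) (A : {set T}) (l : seq T) : uniq l ->
  count (mem A) l = #|A :&: [set x in l]|.
Proof.
move=> l_uniq; rewrite -size_filter -(card_uniqP (filter_uniq _ l_uniq)).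
by apply: eq_card => x; rewrite mem_filter !inE andbC.
Qed.

Lemma sum_gt0_le_size_eq1 (T : eqType) (r : seq T) (f : T -> nat) :
  {in r, forall x, 0 < f x} -> \sum_(x <- r) f x <= size r -> {in r, forall x, f x = 1}.
Proof.
move=> f_gt0; have -> : \sum_(x <- r) f x = \sum_(x <- r) (f x - 1) + size r.
  rewrite -sum1_size -big_split big_seq [RHS]big_seq; apply: eq_bigr => x xr /=.
  by rewrite subnK ?f_gt0.
rewrite -[X in _ <= X]add0n leq_add2r leqn0 sum_nat_seq_eq0 => /allP f_le1 x xr.
by have := f_le1 x xr; have := f_gt0 x xr; rewrite /= subn_eq0; lia.
Qed.

Lemma count_mem_le_card (T : finType) (A : {set T}) (l : seq T) : uniq l ->
  count (mem A) l <= #|A|.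
Proof. by move=> l_uniq; rewrite count_mem_card // subset_leq_card // subsetIl. Qed.

Lemma card_eq_count_mem (T : finType) (A : {set T}) (l : seq T) : uniq l ->
  {subset A <= l} -> #|A| = count (mem A) l.
Proof.
move=> l_uniq Al; rewrite count_mem_card // (setIidPl _) //.
by apply/subsetP => x /Al; rewrite inE.
Qed.

Lemma size_undup_sorted_cons (x y : nat) (r : seq nat) : sorted leq [:: x, y & r] ->
  size (undup [:: x, y & r]) = (x != y) + size (undup (y :: r)).
Proof.
move=> /= /andP[le_xy path_yr].
have -> : (x \in y :: r) = (x == y).
  rewrite inE; case: eqP => //= x_neq_y; apply/negP => xr.
  have := allP (order_path_min leq_trans path_yr) x xr; lia.
by case: eqP.
Qed.

Lemma sorted_leq_map2 (I : Type) (op : nat -> nat -> nat) (f g : I -> nat) (r : seq I) :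
  (forall a b c d, a <= b -> c <= d -> op a c <= op b d) ->
  sorted leq (map f r) -> sorted leq (map g r) ->
  sorted leq (map (fun i => op (f i) (g i)) r).
Proof.
move=> op_mono; elim: r => // i [|j r] IHr //= /andP[le_f sf] /andP[le_g sg].
by rewrite op_mono //; apply: IHr.
Qed.

Lemma neq_maxn_minn (a b c d : nat) : a <= b -> c <= d ->
  (a != b) + (c != d) <= (maxn a c != maxn b d) + (minn a c != minn b d).
Proof. by move=> *; do 4!case: eqP => /=; lia. Qed.

Lemma size_undup_maxn_minn (I : Type) (f g : I -> nat) (r : seq I) :
  sorted leq (map f r) -> sorted leq (map g r) ->
  size (undup (map f r)) + size (undup (map g r)) <=
  size (undup (map (fun i => maxn (f i) (g i)) r)) +
  size (undup (map (fun i => minn (f i) (g i)) r)).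
Proof.
have max_mono a b c d : a <= b -> c <= d -> maxn a c <= maxn b d by lia.
have min_mono a b c d : a <= b -> c <= d -> minn a c <= minn b d by lia.
case: r => // i r; elim: r i => // j r IHr i sf sg.
have smax := sorted_leq_map2 max_mono sf sg.
have smin := sorted_leq_map2 min_mono sf sg.
rewrite !map_cons !size_undup_sorted_cons //.
move: sf sg => /andP[le_f sf] /andP[le_g sg].
have := IHr j sf sg; rewrite !map_cons.
by have := neq_maxn_minn le_f le_g; lia.
Qed.

Lemma sorted_map_enum_ord k (f : 'I_k -> nat) :
  (forall i j : 'I_k, i < j -> f i <= f j) -> sorted leq (map f (enum 'I_k)).
Proof.
move=> f_mono; rewrite sorted_map.
have : sorted (relpre val ltn) (enum 'I_k) by rewrite -sorted_map val_enum_ord iota_ltn_sorted.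
exact: sub_sorted.
Qed.

Section Positions.
Variable T : eqType.
Implicit Types (a b : pred T) (p : seq T).

Lemma find_predU a b p : find (predU a b) p = minn (find a p) (find b p).
Proof.
elim: p => //= x p ->; rewrite /predU /=.
by case: (a x); case: (b x) => //=; rewrite minnSS.
Qed.

Lemma index_rev p x : uniq p -> x \in p -> index x (rev p) = size p - (index x p).+1.
Proof.
move=> p_uniq xp; set i := index x p; have ixp : i < size p by rewrite index_mem.
have nth_rev_x : nth x (rev p) (size p - i.+1) = x.
  rewrite nth_rev; last by lia.
  by rewrite (_ : _ - _ = i) ?nth_index //; lia.
by rewrite -{1}nth_rev_x index_uniq ?size_rev ?rev_uniq //; lia.
Qed.

Lemma count1_index a p : uniq p -> count a p = 1 ->
  find a p < size p /\ {in p, forall x, a x = (index x p == find a p)}.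
Proof.
move=> p_uniq count1; have has_a : has a p by rewrite has_count count1.
have find_lt : find a p < size p by rewrite -has_find.
split=> // x xp; apply/idP/eqP => [ax | ixp]; last first.
  by rewrite -(nth_index x xp) ixp; apply: nth_find.
have [z filter_a] : exists z, filter a p = [:: z].
  by move: (size_filter a p); rewrite count1; case: (filter a p) => [|z [|]] // _; exists z.
have mem_z y : y \in p -> a y -> y = z.
  by move=> yp ay; have := mem_filter a y p; rewrite filter_a inE ay yp => /eqP.
rewrite -(index_uniq x find_lt p_uniq) (mem_z _ (mem_nth x find_lt) (nth_find x has_a)).
by rewrite (mem_z x xp ax).
Qed.

Lemma find_rev_count1 a p : uniq p -> count a p = 1 ->
  find a (rev p) = size p - (find a p).+1.
Proof.
move=> p_uniq count1; have [_ a_idx] := count1_index p_uniq count1.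
have rev_uniq_p : uniq (rev p) by rewrite rev_uniq.
have [_ a_idx_rev] := count1_index rev_uniq_p (etrans (count_rev a p) count1).
have /hasP[x xp ax] : has a p by rewrite has_count count1.
have xp_rev : x \in rev p by rewrite mem_rev.
move: (a_idx x xp) (a_idx_rev x xp_rev); rewrite ax => /esym/eqP <- /esym/eqP <-.
exact: index_rev.
Qed.

Lemma map_index_uniq p : uniq p -> map (index^~ p) p = iota 0 (size p).
Proof.
elim: p => //= x p IHp /andP[xNp p_uniq]; rewrite eqxx -add1n iotaDl -IHp // -map_comp.
by congr (_ :: _); apply/eq_in_map => y yp /=; case: eqP => // xy; rewrite xy yp in xNp.
Qed.

Lemma ohead_filter_eq a p x : uniq p -> x \in p ->
  (ohead (filter a p) == Some x) = (index x p == find a p).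
Proof.
move=> p_uniq xp.
have -> : ohead (filter a p) = if has a p then Some (nth x p (find a p)) else None.
  by elim: p {p_uniq xp} => //= y p IHp; case: (a y).
rewrite has_find; case: ltnP => [find_lt | find_ge].
  by apply/eqP/eqP => [[<-] | <-]; rewrite ?index_uniq ?nth_index.
by apply/esym/eqP => ixp; move: find_ge; rewrite -ixp leqNgt index_mem xp.
Qed.

Lemma ohead_mem (l : seq T) x : ohead l = Some x -> x \in l.
Proof. by case: l => //= y l [->]; apply: mem_head. Qed.

End Positions.

Lemma count_mem_iota (r : seq nat) n : all (gtn n) r ->
  count (mem r) (iota 0 n) = size (undup r).
Proof.
move=> r_lt; rewrite -size_filter; apply/perm_size/uniq_perm.
- exact: filter_uniq (iota_uniq _ _).
- exact: undup_uniq.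
move=> m; rewrite mem_filter mem_undup mem_iota /= add0n.
by case: (boolP (m \in r)) => [mr | _]; [exact: (allP r_lt m mr) | ].
Qed.

Section Walks.
Variables (V E : finType) (src tgt : E -> V).

Lemma walk_balance x p v : walkb src tgt x p ->
  count (fun e => src e == v) p + (v == last x (map tgt p)) =
  count (fun e => tgt e == v) p + (v == x).
Proof.
elim: p x => [|e p IHp] x //= /andP[/eqP <- Wp].
have := IHp _ Wp; rewrite [tgt e == v]eq_sym [src e == v]eq_sym.
by case: (v == src e); case: (v == tgt e) => /=; lia.
Qed.

Lemma dipath_uniq s t p : dipath src tgt s t p -> uniq p.
Proof. by case/and3P=> _ _ /= /andP[_ /map_uniq]. Qed.

Lemma walk_exit (R : pred V) x p : walkb src tgt x p ->
  x \in R -> last x (map tgt p) \notin R ->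
  has (fun e => (src e \in R) && (tgt e \notin R)) p.
Proof.
elim: p x => [|e p IHp] x /=; first by move=> _ ->.
case/andP=> /eqP <- Wp xR lastR.
case: (boolP (tgt e \in R)) => tR; last by rewrite xR.
by rewrite (IHp _ Wp tR lastR) orbT.
Qed.

Lemma count_exit_le (R : pred V) x p : walkb src tgt x p ->
  {in p, forall e, tgt e \in R -> src e \in R} ->
  count (fun e => (src e \in R) && (tgt e \notin R)) p <= (x \in R).
Proof.
elim: p x => [|e p IHp] x //= /andP[/eqP <- Wp] closedR.
have IH := IHp _ Wp (sub_in1 (@mem_behead _ (e :: p)) closedR).
move: IH (closedR e (mem_head _ _)).
by case: (src e \in R); case: (tgt e \in R) => //=; lia.
Qed.

Definition edge_rel (Q : pred E) : rel V :=
  fun u v => [exists e, [&& Q e, src e == u & tgt e == v]].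

Lemma edge_rel_walk (Q : pred E) x vs : path (edge_rel Q) x vs ->
  exists p, [/\ walkb src tgt x p, map tgt p = vs & all Q p].
Proof.
elim: vs x => [|y vs IHvs] x /=; first by exists [::].
case/andP=> /existsP[e /and3P[Qe /eqP srce /eqP tgte]] /IHvs[p [Wp <- Qp]].
by exists (e :: p); rewrite /= srce tgte eqxx Qe.
Qed.

Lemma connect_edge_rel_dipath (Q : pred E) s t : connect (edge_rel Q) s t ->
  exists2 p, dipath src tgt s t p & all Q p.
Proof.
case/connectP=> vs + ->; case/shortenP=> vs' pth uniq_vs _.
have [p [Wp tgtp Qp]] := edge_rel_walk pth.
by exists p; rewrite // /dipath Wp tgtp eqxx.
Qed.

End Walks.

Section Flows.
Variables (V E : finType) (src tgt : E -> V) (s t : V).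

Definition deg (f : E -> V) (F : {set E}) (v : V) : nat := \sum_(e in F) (f e == v).

Definition is_flow (m : nat) (F : {set E}) : Prop := forall v,
  deg src F v + (if v == t then m else 0) = deg tgt F v + (if v == s then m else 0).

Lemma deg_setU f (A B : {set E}) v : [disjoint A & B] ->
  deg f (A :|: B) v = deg f A v + deg f B v.
Proof. by move=> AB; rewrite /deg -bigU //; apply: eq_bigl => e; rewrite !inE. Qed.

Lemma deg_setD f (A B : {set E}) v : B \subset A ->
  deg f A v = deg f (A :\: B) v + deg f B v.
Proof. by move=> /setIidPr BA; rewrite /deg (big_setID B) /= BA addnC. Qed.

Lemma deg_seq f (r : seq E) v : uniq r ->
  deg f [set e in r] v = count (fun e => f e == v) r.
Proof.
move=> r_uniq; rewrite /deg (eq_bigl (mem r)) => [|e]; last by rewrite inE.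
rewrite -big_uniq //= -sum1_count [RHS]big_mkcond; apply: eq_bigr => e _.
by case: (f e == v).
Qed.

Lemma sum_deg f F (S : {set V}) :
  \sum_(v in S) deg f F v = \sum_(e in F) (f e \in S).
Proof.
rewrite exchange_big; apply: eq_bigr => e _.
case: (boolP (f e \in S)) => [eS | eNS].
  by rewrite (bigD1 (f e)) //= eqxx big1 // => v /andP[_ /negbTE]; rewrite eq_sym => ->.
by rewrite big1 // => v vS; case: eqP => // fev; rewrite fev vS in eNS.
Qed.

Lemma is_flow0 : is_flow 0 set0.
Proof. by move=> v; rewrite /deg !big_set0; case: ifP; case: ifP. Qed.

Lemma is_flowU a b (A B : {set E}) : [disjoint A & B] ->
  is_flow a A -> is_flow b B -> is_flow (a + b) (A :|: B).
Proof.
move=> AB fA fB v; rewrite !deg_setU //.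
by move: (fA v) (fB v); case: (v == t); case: (v == s); lia.
Qed.

Lemma is_flowD a b (A B : {set E}) : B \subset A ->
  is_flow (a + b) A -> is_flow b B -> is_flow a (A :\: B).
Proof.
move=> BA fA fB v; move: (fA v) (fB v).
rewrite (deg_setD src v BA) (deg_setD tgt v BA).
by case: (v == t); case: (v == s); lia.
Qed.

Lemma dipath_flow p : dipath src tgt s t p -> is_flow 1 [set e in p].
Proof.
move=> dp v; rewrite !deg_seq ?(dipath_uniq dp) //.
case/and3P: dp => Wp /eqP lastp _; have := walk_balance v Wp; rewrite lastp.
by case: (v == t); case: (v == s).
Qed.

Lemma flow_dipath m F : 0 < m -> is_flow m F ->
  exists2 p, dipath src tgt s t p & all (mem F) p.
Proof.
move=> m_gt0 fF; apply: connect_edge_rel_dipath.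
set S := [set v | connect (edge_rel src tgt (mem F)) s v].
have sS : s \in S by rewrite inE connect0.
suff : t \in S by rewrite inE.
apply/negPn/negP => tNS.
have S_closed : \sum_(e in F) (src e \in S) <= \sum_(e in F) (tgt e \in S).
  apply: leq_sum => e eF; case: (boolP (src e \in S)) => //=.
  rewrite !inE lt0b => se; apply: (connect_trans se (connect1 _)).
  by apply/existsP; exists e; rewrite !eqxx !andbT.
have S_excess : \sum_(v in S) deg src F v = \sum_(v in S) deg tgt F v + m.
  rewrite (bigD1 s) //= [in RHS](bigD1 s) //=.
  have := fF s; rewrite eqxx; case: eqP => [st | _]; first by rewrite -st sS in tNS.
  rewrite addn0 => ->; rewrite -addnA [m + _]addnC addnA; congr (_ + _ + _).
  apply: eq_bigr => v /andP[vS vNs]; have := fF v; rewrite (negbTE vNs).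
  by case: eqP => [vt | _]; [rewrite -vt vS in tNS | rewrite !addn0].
by move: S_closed; rewrite -!sum_deg S_excess; lia.
Qed.

Lemma disjoint_paths_cons p P : disjoint_paths src tgt s t (p :: P) <->
  [/\ dipath src tgt s t p, all (fun q => ~~ has (mem q) p) P &
      disjoint_paths src tgt s t P].
Proof.
rewrite /disjoint_paths /=.
by split=> [[/andP[-> ->] /andP[-> ->]] | [-> -> [-> ->]]].
Qed.

Lemma flow_decomposition m F : is_flow m F ->
  exists Q, [/\ size Q = m, disjoint_paths src tgt s t Q & all (all (mem F)) Q].
Proof.
elim: m F => [|m IHm] F fF; first by exists [::].
have [p dp pF] := flow_dipath (ltn0Sn m) fF.
have pF_sub : [set e in p] \subset F.
  by apply/subsetP => e; rewrite inE; apply: (allP pF).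
have fF' : is_flow m (F :\: [set e in p]).
  by apply: is_flowD pF_sub _ (dipath_flow dp); rewrite addn1.
have [Q [sizeQ dQ QF']] := IHm _ fF'.
have QF q : q \in Q -> {subset q <= F :\: [set e in p]}.
  by move=> qQ e eq; apply: (allP (allP QF' q qQ)).
exists (p :: Q); split; rewrite /= ?sizeQ //.
  apply/disjoint_paths_cons; split=> //; apply/allP => q qQ.
  by apply/hasP => -[e ep /(QF q qQ)]; rewrite !inE ep.
rewrite pF; apply/allP => q qQ; apply/allP => e /(QF q qQ).
by rewrite inE => /andP[].
Qed.

Lemma disjoint_paths_uniq P : disjoint_paths src tgt s t P -> uniq (flatten P).
Proof.
elim: P => [|p P IHP] //= /disjoint_paths_cons[dp PNp dP].
rewrite cat_uniq (dipath_uniq dp) (IHP dP) andbT /=.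
apply/hasP => -[e /flattenP[q qP eq] ep].
by have /hasP := allP PNp q qP; apply; exists e.
Qed.

Lemma disjoint_paths_flow P : disjoint_paths src tgt s t P ->
  is_flow (size P) [set e in flatten P].
Proof.
elim: P => [_ | p P IHP /disjoint_paths_cons[dp PNp dP]].
  have -> : [set e in flatten [::]] = set0 :> {set E} by apply/setP => e; rewrite !inE.
  exact: is_flow0.
rewrite (_ : [set e in _] = [set e in p] :|: [set e in flatten P]); last first.
  by apply/setP => e; rewrite !inE mem_cat.
rewrite /= -add1n; apply: is_flowU (dipath_flow dp) (IHP dP).
rewrite -setI_eq0; apply/eqP/setP => e; rewrite !inE; apply/andP => -[ep /flattenP[q qP eq]].
by have /hasP := allP PNp q qP; apply; exists e.
Qed.

(* The arc (e, true) runs along e, the arc (e, false) against it. *)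
Definition arc_src (a : E * bool) : V := if a.2 then src a.1 else tgt a.1.
Definition arc_tgt (a : E * bool) : V := if a.2 then tgt a.1 else src a.1.

Definition residual (F : {set E}) (a : E * bool) : bool := a.2 == (a.1 \notin F).

Definition arcs_of (st : seq (E * bool)) (b : bool) : {set E} := [set e | (e, b) \in st].

Lemma residual_uniq F st : all (residual F) st -> uniq st -> uniq (map fst st).
Proof.
move=> /allP resF; rewrite map_inj_in_uniq // => -[e b] [e' b'].
by move=> /resF/eqP /= + /resF/eqP /= => -> -> /= ->.
Qed.

Lemma deg_arcs_of f st b v : uniq (map fst st) ->
  deg f (arcs_of st b) v = count (fun a => (a.2 == b) && (f a.1 == v)) st.
Proof.
move=> st_uniq; set st_b := map fst (filter (fun a => a.2 == b) st).
rewrite (_ : arcs_of st b = [set e in st_b]).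
  rewrite deg_seq /st_b; last by apply/(subseq_uniq _ st_uniq)/map_subseq/filter_subseq.
  by rewrite count_map count_filter; apply: eq_count => a; rewrite /= andbC.
apply/setP => e; rewrite !inE; apply/idP/mapP => [ebst | [[e' b'] + ->]].
  by exists (e, b); rewrite // mem_filter eqxx.
by rewrite mem_filter => /andP[/eqP /= -> ].
Qed.

Lemma count_arc_end (f g : E -> V) st v :
  count (fun a : E * bool => (if a.2 then f a.1 else g a.1) == v) st =
  count (fun a => (a.2 == true) && (f a.1 == v)) st +
  count (fun a => (a.2 == false) && (g a.1 == v)) st.
Proof.
elim: st => [|[e [] ] st IHst] //=; rewrite IHst add0n; [exact: addnA | exact: addnCA].
Qed.

Lemma is_flow_augment m F st : is_flow m F ->
  dipath arc_src arc_tgt s t st -> all (residual F) st ->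
  is_flow m.+1 (F :\: arcs_of st false :|: arcs_of st true).
Proof.
move=> fF dst resF v.
have st_uniq := residual_uniq resF (dipath_uniq dst).
have back_sub : arcs_of st false \subset F.
  apply/subsetP => e; rewrite inE => est; have := allP resF _ est.
  by rewrite /residual; case: (e \in F) => //= /eqP.
have fwd_disj : [disjoint F :\: arcs_of st false & arcs_of st true].
  rewrite -setI_eq0; apply/eqP/setP => e; rewrite !inE.
  case: (boolP ((e, true) \in st)) => [est | _]; last by rewrite !andbF.
  by have := allP resF _ est; rewrite /residual /=; case: (e \in F); rewrite ?andbF.
case/and3P: dst => Wst /eqP lastst _.
have := walk_balance v Wst; rewrite lastst /arc_src /arc_tgt !count_arc_end.
rewrite -!deg_arcs_of // !deg_setU // .
move: (fF v); rewrite (deg_setD src v back_sub) (deg_setD tgt v back_sub).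
by case: (v == t); case: (v == s) => /=; lia.
Qed.

Lemma residual_connect_flow m F : is_flow m F ->
  connect (edge_rel arc_src arc_tgt (residual F)) s t -> exists F', is_flow m.+1 F'.
Proof.
move=> fF /connect_edge_rel_dipath[st dst resF].
by eexists; apply: is_flow_augment fF dst resF.
Qed.

End Flows.

Lemma disjoint_paths_mem_eq (V E : finType) (src tgt : E -> V) s t P (p q : seq E) e :
  disjoint_paths src tgt s t P -> p \in P -> q \in P -> e \in p -> e \in q -> p = q.
Proof.
elim: P => // r P IHP /disjoint_paths_cons[_ PNr dP].
rewrite !inE => /predU1P[-> | pP] /predU1P[-> | qP] ep eq //; last exact: IHP.
- by have /hasP[] := allP PNr q qP; exists e.
- by have /hasP[] := allP PNr p pP; exists e.
Qed.

Section MinCuts.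
Variables (V E : finType) (src tgt : E -> V) (s t : V) (P : seq (seq E)).
Hypothesis maxP : max_disjoint_paths src tgt s t P.

Lemma max_paths_small_cut : exists2 Y, st_cut src tgt s t Y & #|Y| <= size P.
Proof.
have [dP maxP'] := maxP.
set F := [set e in flatten P].
set R := [set v | connect (edge_rel (arc_src src tgt) (arc_tgt src tgt) (residual F)) s v].
have sR : s \in R by rewrite inE connect0.
have tNR : t \notin R.
  rewrite inE; apply/negP => /(residual_connect_flow (disjoint_paths_flow dP)).
  case=> F' /flow_decomposition[Q [sizeQ dQ _]].
  by have := maxP' Q dQ; rewrite sizeQ ltnn.
have residual_step (a : E * bool) : residual F a ->
    arc_src src tgt a \in R -> arc_tgt src tgt a \in R.
  rewrite !inE => resa Ra; apply: (connect_trans Ra (connect1 _)).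
  by apply/existsP; exists a; rewrite resa !eqxx.
set exit := fun e => (src e \in R) && (tgt e \notin R).
exists [set e in F | exit e].
  move=> p /and3P[Wp /eqP lastp _].
  have := walk_exit Wp sR; rewrite lastp => /(_ tNR) /hasP[e ep /andP[se te]].
  apply/hasP; exists e; rewrite // !inE /exit se te !andbT.
  apply/negPn/negP => eNF.
  have := residual_step (e, true); rewrite /residual /= [_ \in F]inE (negbTE eNF).
  by move=> /(_ isT se); apply/negP.
have exits_le1 q : q \in P -> count exit q <= 1.
  move=> qP; have /and3P[Wq _ _] := allP dP.1 q qP.
  apply: leq_trans (count_exit_le Wq _) _; last by rewrite sR.
  move=> e eq te.
  have := residual_step (e, false); rewrite /residual /arc_src /arc_tgt /= [_ \in F]inE.
  by apply=> //; rewrite eq_sym eqbF_neg negbK; apply/flattenP; exists q.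
rewrite (card_eq_count_mem (disjoint_paths_uniq dP)); last by move=> e; rewrite !inE => /andP[].
rewrite count_flatten sumnE big_map -sum1_size big_seq [X in _ <= X]big_seq.
apply: leq_sum => q qP; rewrite -(eq_in_count (a1 := exit)) ?exits_le1 // => e eq.
by rewrite !inE (_ : e \in flatten P) //; apply/flattenP; exists q.
Qed.

Lemma min_cut_meets_max_paths X : min_st_cut src tgt s t X ->
  {in P, forall q, count (mem X) q = 1} /\ {subset X <= flatten P}.
Proof.
case=> cutX minX; have [Y cutY leYP] := max_paths_small_cut.
have [dP _] := maxP; have P_uniq := disjoint_paths_uniq dP.
have leXP : #|X| <= size P := leq_trans (minX Y cutY) leYP.
have meets q : q \in P -> 0 < count (mem X) q.
  by move=> qP; rewrite -has_count; apply: cutX; apply: (allP dP.1).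
have once : {in P, forall q, count (mem X) q = 1}.
  apply: sum_gt0_le_size_eq1 meets (leq_trans _ leXP).
  by have := count_mem_le_card X P_uniq; rewrite count_flatten sumnE big_map.
have cnt_size : count (mem X) (flatten P) = size P.
  rewrite count_flatten sumnE big_map -sum1_size big_seq [RHS]big_seq.
  exact: eq_bigr once.
split=> // x Xx; suff XP : X \subset [set e in flatten P].
  by have := subsetP XP x Xx; rewrite inE.
by apply/setIidPl/eqP; rewrite eqEcard subsetIl -count_mem_card // cnt_size leXP.
Qed.

End MinCuts.

Section PathSelection.
Variables (V E : finType) (src tgt : E -> V) (s t : V) (P : seq (seq E)).
Hypothesis dP : disjoint_paths src tgt s t P.

Lemma mem_selected (select : seq E -> option E) p e :
  (forall q x, select q = Some x -> x \in q) -> p \in P -> e \in p ->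
  (e \in [set x | has (fun q => select q == Some x) P]) = (select p == Some e).
Proof.
move=> select_mem pP ep; rewrite inE; apply/hasP/idP => [[q qP /eqP sel_q] | ]; last by exists p.
by rewrite (disjoint_paths_mem_eq dP pP qP ep (select_mem _ _ sel_q)) sel_q.
Qed.

Lemma mem_S_min A p e : p \in P -> e \in p -> (e \in S_min P A) = (first_in A p == Some e).
Proof.
by apply: mem_selected => q x /ohead_mem; rewrite mem_filter => /andP[].
Qed.

Lemma mem_S_max A p e : p \in P -> e \in p -> (e \in S_max P A) = (last_in A p == Some e).
Proof.
by apply: mem_selected => q x /ohead_mem; rewrite mem_rev mem_filter => /andP[].
Qed.

End PathSelection.

Section MinCutPositions.
Variables (V E : finType) (src tgt : E -> V) (s t : V) (P : seq (seq E)).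
Hypothesis maxP : max_disjoint_paths src tgt s t P.
Variables (X Y : {set E}) (p : seq E).
Hypotheses (minX : min_st_cut src tgt s t X) (minY : min_st_cut src tgt s t Y).
Hypothesis pP : p \in P.

Let p_uniq : uniq p := dipath_uniq (allP maxP.1.1 p pP).

Lemma min_cut_index Z : min_st_cut src tgt s t Z ->
  find (mem Z) p < size p /\ {in p, forall e, (e \in Z) = (index e p == find (mem Z) p)}.
Proof. by move=> minZ; apply: count1_index p_uniq ((min_cut_meets_max_paths maxP minZ).1 p pP). Qed.

Let find_setU q : find (mem (X :|: Y)) q = minn (find (mem X) q) (find (mem Y) q).
Proof. by rewrite -find_predU; apply: eq_find => e; rewrite !inE. Qed.

Lemma mem_S_min_setU e : e \in p ->
  (e \in S_min P (X :|: Y)) = (index e p == minn (find (mem X) p) (find (mem Y) p)).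
Proof.
move=> ep; rewrite (mem_S_min maxP.1 _ pP ep) /first_in.
by rewrite (ohead_filter_eq _ p_uniq ep) find_setU.
Qed.

Lemma mem_S_max_setU e : e \in p ->
  (e \in S_max P (X :|: Y)) = (index e p == maxn (find (mem X) p) (find (mem Y) p)).
Proof.
move=> ep; rewrite (mem_S_max maxP.1 _ pP ep) /last_in -filter_rev.
rewrite (ohead_filter_eq _ _ (_ : e \in rev p)) ?rev_uniq ?mem_rev // find_setU.
rewrite !find_rev_count1 ?(min_cut_meets_max_paths maxP minX).1
  ?(min_cut_meets_max_paths maxP minY).1 // index_rev //.
have [a_lt _] := min_cut_index minX; have [b_lt _] := min_cut_index minY.
have i_lt : index e p < size p by rewrite index_mem.
move: (find _ p) (find _ p) (index e p) (size p) a_lt b_lt i_lt => a b i n *.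
by apply/eqP/eqP; lia.
Qed.

End MinCutPositions.

Lemma count_Eset_path (E : finType) k (D : 'I_k -> {set E}) (d : 'I_k -> nat) p :
  uniq p -> (forall i, d i < size p) ->
  (forall i, {in p, forall e, (e \in D i) = (index e p == d i)}) ->
  count (mem (Eset D)) p = size (undup (map d (enum 'I_k))).
Proof.
move=> p_uniq d_lt D_idx; rewrite -(count_mem_iota (n := size p)); last first.
  by apply/allP => _ /mapP[i _ ->]; apply: d_lt.
rewrite -(map_index_uniq p_uniq) count_map; apply: eq_in_count => e ep /=.
apply/bigcupP/mapP => [[i _ eDi] | [i _ ide]]; exists i; rewrite ?mem_enum //.
  by apply/eqP; rewrite -D_idx.
by rewrite D_idx // ide.
Qed.

Lemma count_join_meet_path (V E : finType) (src tgt : E -> V) s t P k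
    (C1 C2 : 'I_k -> {set E}) p :
  max_disjoint_paths src tgt s t P ->
  U_lr src tgt s t C1 -> U_lr src tgt s t C2 -> p \in P ->
  count (mem (Eset C1)) p + count (mem (Eset C2)) p <=
  count (mem (Eset (Ljoin P C1 C2))) p + count (mem (Eset (Lmeet P C1 C2))) p.
Proof.
move=> maxP [minC1 leC1] [minC2 leC2] pP.
have dp := allP maxP.1.1 p pP; have p_uniq := dipath_uniq dp.
pose a i := find (mem (C1 i)) p; pose b i := find (mem (C2 i)) p.
have posC1 i := min_cut_index maxP pP (minC1 i).
have posC2 i := min_cut_index maxP pP (minC2 i).
have a_lt i : a i < size p := (posC1 i).1.
have b_lt i : b i < size p := (posC2 i).1.
rewrite (count_Eset_path (d := a) p_uniq a_lt (fun i => (posC1 i).2)).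
rewrite (count_Eset_path (d := b) p_uniq b_lt (fun i => (posC2 i).2)).
have join_lt i : maxn (a i) (b i) < size p by rewrite gtn_max a_lt b_lt.
have meet_lt i : minn (a i) (b i) < size p by rewrite gtn_min a_lt.
rewrite (count_Eset_path p_uniq join_lt
  (fun i e ep => mem_S_max_setU maxP (minC1 i) (minC2 i) pP ep)).
rewrite (count_Eset_path p_uniq meet_lt
  (fun i e ep => mem_S_min_setU maxP (C1 i) (C2 i) pP ep)).
by apply: size_undup_maxn_minn; apply: sorted_map_enum_ord => i j ij;
  [apply: leC1 | apply: leC2].
Qed.

Theorem claim2 (V E : finType) (src tgt : E -> V) (s t : V) (k : nat)
  (P : seq (seq E)) (C1 C2 : 'I_k -> {set E}) :
  1 <= k ->
  max_disjoint_paths src tgt s t P ->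
  U_lr src tgt s t C1 -> U_lr src tgt s t C2 ->
  #|Eset (Ljoin P C1 C2)| + #|Eset (Lmeet P C1 C2)|
    >= #|Eset C1| + #|Eset C2|.
Proof.
move=> _ maxP C1_lr C2_lr; have P_uniq := disjoint_paths_uniq maxP.1.
have card_Eset C : U_lr src tgt s t C -> #|Eset C| = count (mem (Eset C)) (flatten P).
  case=> minC _; apply: card_eq_count_mem P_uniq _ => e /bigcupP[i _].
  exact: (min_cut_meets_max_paths maxP (minC i)).2.
rewrite (card_Eset _ C1) // (card_Eset _ C2) //.
apply: leq_trans (leq_add (count_mem_le_card _ P_uniq) (count_mem_le_card _ P_uniq)).
rewrite !count_flatten !sumnE !big_map -!big_split big_seq [X in _ <= X]big_seq /=.
by apply: leq_sum => p pP; apply: count_join_meet_path maxP C1_lr C2_lr pP.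
Qed.
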